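(* Let $d>0$, $r_C>0$, and let $\mathcal{C}=\{(x,y,r_C): |x|\le d,\ |y|\le d\}$ be the square of half-width $d$ centered at $(0,0,r_C)$ in the plane $z=r_C$, with unit normal $\mathbf{e}_z$. Let $l\ge1$ and $-l\le m\le l$ be integers. If $m$ is not a multiple of $4$ (i.e. $m$ is odd, or $m=2k$ with $k$ odd), then $$v_{lm}:=\int_{\mathcal{C}}\frac{\boldsymbol{\nu}_{lm}(\theta,\phi)}{R^{l+2}}\cdot\mathbf{e}_z\,dS=0.$$
   Context: $(R,\theta,\phi)$ are spherical coordinates of $(x,y,r_C)$: $R=\sqrt{x^2+y^2+r_C^2}$, $\theta=\arccos(r_C/R)$, $\phi$ the azimuthal angle of $(x,y)$; $\mathbf{e}_R,\mathbf{e}_\theta,\mathbf{e}_\phi$ the spherical orthonormal frame. $Y_{lm}(\theta,\phi)=\sqrt{\frac{2l+1}{4\pi}\frac{(l-m)!}{(l+m)!}}\,e^{im\phi}P_l^m(\cos\theta)$ with $P_l^m(x)=\frac{(-1)^m}{2^l l!}(1-x^2)^{m/2}\frac{d^{m+l}}{dx^{m+l}}(x^2-1)^l$, and $\boldsymbol{\nu}_{lm}=-(l+1)Y_{lm}\mathbf{e}_R+\frac{\partial Y_{lm}}{\partial\theta}\mathbf{e}_\theta+\frac{imY_{lm}}{\sin\theta}\mathbf{e}_\phi$. *)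

From Stdlib Require Import Reals ZArith Lra.
From Coquelicot Require Import Coquelicot.
Open Scope R_scope.

(* Azimuthal angle of (x,y) in (-PI, PI]; value 0 at the origin (irrelevant, measure zero). *)
Definition azimuth (x y : R) : R :=
  if Rlt_dec 0 x then atan (y / x)
  else if Rlt_dec x 0 then
    (if Rle_dec 0 y then atan (y / x) + PI else atan (y / x) - PI)
  else if Rlt_dec 0 y then PI / 2
  else if Rlt_dec y 0 then - (PI / 2)
  else 0.

Definition sphR (rC x y : R) : R := sqrt (x ^ 2 + y ^ 2 + rC ^ 2).
Definition sphTheta (rC x y : R) : R := acos (rC / sphR rC x y).
Definition sphPhi (x y : R) : R := azimuth x y.

(* Associated Legendre function, Rodrigues formula:
   P_l^m(t) = (-1)^m / (2^l l!) (1-t^2)^{m/2} d^{m+l}/dt^{m+l} (t^2-1)^l,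
   for integers -l <= m <= l; (1-t^2)^{m/2} is written sqrt(1-t^2)^m (Z-power). *)
Definition assocLegendre (l : nat) (m : Z) (t : R) : R :=
  (-1) ^ (Z.abs_nat m) / (2 ^ l * INR (Factorial.fact l))
  * powerRZ (sqrt (1 - t ^ 2)) m
  * Derive_n (fun s => (s ^ 2 - 1) ^ l) (Z.to_nat (Z.of_nat l + m)) t.

Definition Ynorm (l : nat) (m : Z) : R :=
  sqrt ((2 * INR l + 1) / (4 * PI)
        * INR (Factorial.fact (Z.to_nat (Z.of_nat l - m)))
        / INR (Factorial.fact (Z.to_nat (Z.of_nat l + m)))).

Definition Y_re (l : nat) (m : Z) (th ph : R) : R :=
  Ynorm l m * cos (IZR m * ph) * assocLegendre l m (cos th).
Definition Y_im (l : nat) (m : Z) (th ph : R) : R :=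
  Ynorm l m * sin (IZR m * ph) * assocLegendre l m (cos th).
Definition Ylm (l : nat) (m : Z) (th ph : R) : C := (Y_re l m th ph, Y_im l m th ph).

Definition dYlm_dtheta (l : nat) (m : Z) (th ph : R) : C :=
  (Derive (fun t => Y_re l m t ph) th, Derive (fun t => Y_im l m t ph) th).

Definition e_R (th ph : R) : R * R * R := (sin th * cos ph, sin th * sin ph, cos th).
Definition e_theta (th ph : R) : R * R * R := (cos th * cos ph, cos th * sin ph, - sin th).
Definition e_phi (th ph : R) : R * R * R := (- sin ph, cos ph, 0).

Definition cscal (c : C) (v : R * R * R) : C * C * C :=
  let '(a, b, e) := v in (Cmult c (RtoC a), Cmult c (RtoC b), Cmult c (RtoC e)).
Definition cadd3 (u v : C * C * C) : C * C * C :=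
  let '(a, b, e) := u in let '(a', b', e') := v in (Cplus a a', Cplus b b', Cplus e e').

Definition nu_lm (l : nat) (m : Z) (th ph : R) : C * C * C :=
  cadd3 (cscal (Cmult (RtoC (- (INR l + 1))) (Ylm l m th ph)) (e_R th ph))
   (cadd3 (cscal (dYlm_dtheta l m th ph) (e_theta th ph))
          (cscal (Cmult (Cmult (0, 1) (RtoC (IZR m)))
                  (Cmult (Ylm l m th ph) (RtoC (/ sin th)))) (e_phi th ph))).

Definition dot_ez (v : C * C * C) : C := let '(_, _, c) := v in c.

(* v_lm = \int_C nu_lm(theta,phi)/R^{l+2} . e_z dS, the square C parametrised by
   (x,y) in [-d,d]^2 (dS = dx dy), written as an iterated Riemann integral of a
   C-valued function. *)
Definition v_lm (d rC : R) (l : nat) (m : Z) : C :=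
  RInt (V := C_R_CompleteNormedModule)
    (fun x => RInt (V := C_R_CompleteNormedModule)
       (fun y => Cmult (RtoC (/ (sphR rC x y) ^ (l + 2)))
                   (dot_ez (nu_lm l m (sphTheta rC x y) (sphPhi x y))))
       (- d) d)
    (- d) d.

(* A quarter turn (x, y) |-> (-y, x) maps the square onto itself, preserves R and theta and
   shifts the azimuth phi by pi/2, so it multiplies the integrand, which depends on phi only
   through e^{i m phi}, by w = e^{i m pi/2}.  Since the integral over the square is invariant
   under the quarter turn (Fubini and a reflection), v_lm = w v_lm, and w <> 1 exactly when
   4 does not divide m.
   The analytic work is the continuity of the integrand on the whole plane, including the
   axis x = y = 0 where phi is meaningless: there P_l^m(cos theta) = sin^|m| theta G(cos theta)
   with G continuously differentiable on (-1, oo) (Rodrigues' formula), and rho^|m| e^{i m phi}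
   is the polynomial (x + i y)^|m| or its conjugate. *)

From Stdlib Require Import Reals ZArith Lra Lia List.
From Coquelicot Require Import Coquelicot.
Open Scope R_scope.

(** * Continuous functions on the plane and their iterated integrals *)

Lemma continuity_2d_pt_swap f x y :
  continuity_2d_pt f x y -> continuity_2d_pt (fun u v => f v u) y x.
Proof. intros H eps; destruct (H eps) as [delta Hd]; exists delta; auto. Qed.

Lemma continuous_slice_l f x y : continuity_2d_pt f x y -> continuous (fun t => f t y) x.
Proof.
  intros H; apply (continuous_comp_2 (fun t => t) (fun _ => y) f).
  - apply continuous_id.
  - apply continuous_const.
  - apply continuity_2d_pt_filterlim, H.
Qed.

Lemma continuous_slice_r f x y : continuity_2d_pt f x y -> continuous (fun t => f x t) y.
Proof. intros H; apply (continuous_slice_l (fun u v => f v u)), continuity_2d_pt_swap, H. Qed.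

Lemma continuity_2d_pt_pow (f : R -> R -> R) n x y :
  continuity_2d_pt f x y -> continuity_2d_pt (fun u v => f u v ^ n) x y.
Proof.
  intros Hf; induction n as [|n IH]; simpl.
  - apply continuity_2d_pt_const.
  - apply continuity_2d_pt_mult; auto.
Qed.

Lemma continuity_2d_pt_comp (g : R -> R) (f : R -> R -> R) x y :
  continuous g (f x y) -> continuity_2d_pt f x y ->
  continuity_2d_pt (fun u v => g (f u v)) x y.
Proof. intros Hg; apply continuity_1d_2d_pt_comp, continuity_pt_filterlim, Hg. Qed.

Ltac continuity_2d :=
  repeat match goal with
  | |- continuity_2d_pt (fun _ _ => ?c) _ _ => apply continuity_2d_pt_const
  | |- continuity_2d_pt (fun u _ => u) _ _ => apply continuity_2d_pt_id1
  | |- continuity_2d_pt (fun _ v => v) _ _ => apply continuity_2d_pt_id2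
  | |- continuity_2d_pt (fun u v => @?a u v + @?b u v) _ _ => apply (continuity_2d_pt_plus a b)
  | |- continuity_2d_pt (fun u v => @?a u v - @?b u v) _ _ => apply (continuity_2d_pt_minus a b)
  | |- continuity_2d_pt (fun u v => @?a u v * @?b u v) _ _ => apply (continuity_2d_pt_mult a b)
  | |- continuity_2d_pt (fun u v => - @?a u v) _ _ => apply (continuity_2d_pt_opp a)
  | |- continuity_2d_pt (fun u v => @?a u v ^ ?n) _ _ => apply (continuity_2d_pt_pow a n)
  end.

Section ContinuousIntegrand.

Variable f : R -> R -> R.
Hypothesis Hf : forall x y, continuity_2d_pt f x y.

Lemma ex_RInt_slice_r x a b : ex_RInt (fun y => f x y) a b.
Proof.
  apply (ex_RInt_continuous (V := R_CompleteNormedModule)); intros z _.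
  apply continuous_slice_r, Hf.
Qed.

Lemma continuous_RInt_slice_r a b x0 : continuous (fun x => RInt (fun y => f x y) a b) x0.
Proof.
  apply filterlim_locally; intros eps.
  set (L := Rabs (b - a) + 1).
  assert (HL : 0 < L) by (pose proof (Rabs_pos (b - a)); unfold L; lra).
  assert (Heps : 0 < eps / L) by (apply Rdiv_lt_0_compat; [apply cond_pos | exact HL]).
  destruct (uniform_continuity_2d f (x0 - 1) (x0 + 1) (Rmin a b) (Rmax a b)
              (fun x y _ _ => Hf x y) (mkposreal _ Heps)) as [delta Hdelta].
  assert (Hpos : 0 < Rmin delta 1) by (apply Rmin_pos; [apply cond_pos | lra]).
  exists (mkposreal _ Hpos); intros u Hu.
  change (Rabs (u - x0) < Rmin delta 1) in Hu.
  change (Rabs (RInt (fun y => f u y) a b - RInt (fun y => f x0 y) a b) < eps).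
  pose proof (Rmin_l delta 1); pose proof (Rmin_r delta 1).
  assert (Hu' : x0 - 1 <= u <= x0 + 1) by (apply Rabs_lt_between' in Hu; lra).
  rewrite <- (RInt_minus (V := R_CompleteNormedModule)) by apply ex_RInt_slice_r.
  apply Rle_lt_trans with (Rabs (b - a) * (eps / L)).
  - apply (norm_RInt_le_const_abs (V := R_NormedModule) (fun y => f u y - f x0 y)).
    + intros t Ht; left; apply Hdelta; try lra.
      rewrite Rminus_diag, Rabs_R0; apply cond_pos.
    + apply (RInt_correct (V := R_CompleteNormedModule)).
      apply (ex_RInt_minus (V := R_NormedModule)); apply ex_RInt_slice_r.
  - apply Rlt_le_trans with (L * (eps / L)); [|right; field; lra].
    apply Rmult_lt_compat_r; [exact Heps | unfold L; lra].
Qed.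

End ContinuousIntegrand.

Lemma derive_zero_const (g : R -> R) a b : (forall t, is_derive g t 0) -> g a = g b.
Proof.
  intros Hg; destruct (Rtotal_order a b) as [Hab | [-> | Hab]]; auto.
  - apply (eq_is_derive (V := R_NormedModule)); auto.
  - symmetry; apply (eq_is_derive (V := R_NormedModule)); auto.
Qed.

Lemma is_derive_RInt_RInt_upper (f : R -> R -> R) a b c u :
  (forall x y, continuity_2d_pt f x y) ->
  is_derive (fun u => RInt (fun y => RInt (fun x => f x y) c u) a b) u
            (RInt (fun y => f u y) a b).
Proof.
  intros Hf.
  assert (Hf' : forall x y, continuity_2d_pt (fun u v => f v u) x y)
    by (intros x y; apply continuity_2d_pt_swap, Hf).
  assert (HF : forall u y, is_derive (fun z => RInt (fun x => f x y) c z) u (f u y)).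
  { intros v y; apply (is_derive_RInt (V := R_NormedModule) (fun x => f x y) _ c).
    - apply filter_forall; intros; apply (RInt_correct (V := R_CompleteNormedModule)).
      apply (ex_RInt_slice_r (fun u v => f v u)), Hf'.
    - apply continuous_slice_l, Hf. }
  replace (RInt (fun y => f u y) a b)
    with (RInt (fun y => Derive (fun z => RInt (fun x => f x y) c z) u) a b)
    by (apply RInt_ext; intros y _; apply is_derive_unique, HF).
  apply is_derive_RInt_param.
  - apply filter_forall; intros x t _; eexists; apply HF.
  - intros t _; apply (continuity_2d_pt_ext f); [|apply Hf].
    intros; symmetry; apply is_derive_unique, HF.
  - apply filter_forall; intros x.
    apply (ex_RInt_continuous (V := R_CompleteNormedModule)); intros z _.
    apply (continuous_RInt_slice_r (fun u v => f v u)), Hf'.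
Qed.

(* Both sides, as functions of [d], have derivative [RInt (fun y => f d y) a b] and vanish at [d = c]. *)
Lemma RInt_RInt_swap (f : R -> R -> R) a b c d :
  (forall x y, continuity_2d_pt f x y) ->
  RInt (fun x => RInt (fun y => f x y) a b) c d
  = RInt (fun y => RInt (fun x => f x y) c d) a b.
Proof.
  intros Hf; set (h := fun x => RInt (fun y => f x y) a b).
  assert (Hdiff : forall u, is_derive
            (fun u => RInt h c u - RInt (fun y => RInt (fun x => f x y) c u) a b) u 0).
  { intros u; replace 0 with (h u - h u) by ring.
    apply (is_derive_minus (V := R_NormedModule)); [|apply is_derive_RInt_RInt_upper, Hf].
    apply (is_derive_RInt (V := R_NormedModule) h _ c); [|apply continuous_RInt_slice_r, Hf].
    apply filter_forall; intros; apply (RInt_correct (V := R_CompleteNormedModule)).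
    apply (ex_RInt_continuous (V := R_CompleteNormedModule)); intros.
    apply continuous_RInt_slice_r, Hf. }
  assert (Hc : RInt h c c - RInt (fun y => RInt (fun x => f x y) c c) a b = 0).
  { rewrite RInt_point, (RInt_ext _ (fun _ => 0)), RInt_const
      by (intros; apply (RInt_point (V := R_CompleteNormedModule))).
    apply Rminus_diag_eq; symmetry; apply (scal_zero_r (K := R_AbsRing) (V := R_NormedModule)). }
  pose proof (derive_zero_const _ c d Hdiff) as Hd.
  unfold h in *; lra.
Qed.

Lemma RInt_comp_opp_sym (h : R -> R) d : (forall z, continuous h z) ->
  RInt (fun y => h (- y)) (- d) d = RInt h (- d) d.
Proof.
  intros Hh.
  assert (Hex : ex_RInt (fun y => h (- y)) (- d) d).
  { apply (ex_RInt_continuous (V := R_CompleteNormedModule)); intros z _.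
    apply (continuous_comp (fun y => - y) h); [|apply Hh].
    apply (continuous_opp (V := R_NormedModule)), continuous_id. }
  pose proof (RInt_comp (V := R_CompleteNormedModule) h (fun y => - y) (fun _ => -1) (- d) d)
    as E; cbv beta in E; rewrite Ropp_involutive in E.
  assert (Hopp : forall x, is_derive (fun y => - y) x (-1)) by (intros; auto_derive; auto; ring).
  specialize (E (fun x _ => Hh (- x)) (fun x _ => conj (Hopp x) (continuous_const _ x))).
  rewrite (RInt_scal (V := R_CompleteNormedModule)) in E by exact Hex.
  rewrite <- (opp_RInt_swap (V := R_CompleteNormedModule) h (- d) d) in E
    by (apply (ex_RInt_continuous (V := R_CompleteNormedModule)); auto).
  change (-1 * RInt (fun y => h (- y)) (- d) d = - RInt h (- d) d) in E; lra.
Qed.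

Definition square_RInt (d : R) (g : R -> R -> R) : R :=
  RInt (fun x => RInt (fun y => g x y) (- d) d) (- d) d.

Definition square_CInt (d : R) (f : R -> R -> C) : C :=
  RInt (V := C_R_CompleteNormedModule)
    (fun x => RInt (V := C_R_CompleteNormedModule) (fun y => f x y) (- d) d) (- d) d.

Lemma square_RInt_quarter_turn d g : (forall x y, continuity_2d_pt g x y) ->
  square_RInt d (fun x y => g (- y) x) = square_RInt d g.
Proof.
  intros Hg; unfold square_RInt.
  rewrite (RInt_ext (V := R_CompleteNormedModule) _ (fun x => RInt (fun y => g y x) (- d) d)).
  - apply (RInt_RInt_swap (fun x y => g y x)); intros; apply continuity_2d_pt_swap, Hg.
  - intros x _; apply (RInt_comp_opp_sym (fun y => g y x)); intros; apply continuous_slice_l, Hg.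
Qed.

Lemma RInt_lin_comb (u v : R -> R) a b s t : ex_RInt u s t -> ex_RInt v s t ->
  RInt (fun x => a * u x + b * v x) s t = a * RInt u s t + b * RInt v s t.
Proof.
  intros Hu Hv.
  rewrite (RInt_plus (V := R_CompleteNormedModule) (fun x => scal a (u x)) (fun x => scal b (v x)))
    by (apply (ex_RInt_scal (V := R_NormedModule)); assumption).
  rewrite !(RInt_scal (V := R_CompleteNormedModule)) by assumption.
  reflexivity.
Qed.

Lemma square_RInt_lin d g h a b :
  (forall x y, continuity_2d_pt g x y) -> (forall x y, continuity_2d_pt h x y) ->
  square_RInt d (fun x y => a * g x y + b * h x y) = a * square_RInt d g + b * square_RInt d h.
Proof.
  intros Hg Hh; unfold square_RInt.
  rewrite (RInt_ext (V := R_CompleteNormedModule) _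
    (fun x => a * RInt (fun y => g x y) (- d) d + b * RInt (fun y => h x y) (- d) d))
    by (intros; apply RInt_lin_comb; apply ex_RInt_slice_r; assumption).
  apply RInt_lin_comb; apply (ex_RInt_continuous (V := R_CompleteNormedModule));
    intros; apply continuous_RInt_slice_r; assumption.
Qed.

Lemma square_RInt_ext d g h : (forall x y, g x y = h x y) -> square_RInt d g = square_RInt d h.
Proof.
  intros E; unfold square_RInt.
  apply RInt_ext; intros; apply RInt_ext; intros; apply E.
Qed.

Lemma continuity_2d_pt_quarter_turn g x y : continuity_2d_pt g (- y) x ->
  continuity_2d_pt (fun u v => g (- v) u) x y.
Proof.
  intros H eps; destruct (H eps) as [delta Hd]; exists delta; intros u v Hu Hv.
  apply Hd; auto; replace (- v - - y) with (- (v - y)) by ring; rewrite Rabs_Ropp; auto.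
Qed.

Lemma RInt_C_components (g : R -> C) a b :
  ex_RInt (fun t => fst (g t)) a b -> ex_RInt (fun t => snd (g t)) a b ->
  RInt (V := C_R_CompleteNormedModule) g a b
  = (RInt (fun t => fst (g t)) a b, RInt (fun t => snd (g t)) a b).
Proof.
  intros H1 H2; apply (is_RInt_unique (V := C_R_CompleteNormedModule)).
  apply (is_RInt_fct_extend_pair (U := R_NormedModule) (V := R_NormedModule));
    apply (RInt_correct (V := R_CompleteNormedModule)); assumption.
Qed.

Definition continuous_C2 (f : R -> R -> C) : Prop :=
  forall x y, continuity_2d_pt (fun u v => fst (f u v)) x y
              /\ continuity_2d_pt (fun u v => snd (f u v)) x y.

Lemma square_CInt_components d f : continuous_C2 f ->
  square_CInt d f
  = (square_RInt d (fun x y => fst (f x y)), square_RInt d (fun x y => snd (f x y))).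
Proof.
  intros Hf; unfold square_CInt, square_RInt.
  rewrite (RInt_ext (V := C_R_CompleteNormedModule) _
    (fun x => (RInt (fun y => fst (f x y)) (- d) d, RInt (fun y => snd (f x y)) (- d) d)))
    by (intros; apply RInt_C_components;
        apply (ex_RInt_slice_r (fun u v => _ (f u v))); apply Hf).
  apply RInt_C_components; apply (ex_RInt_continuous (V := R_CompleteNormedModule)); intros;
    apply (continuous_RInt_slice_r (fun u v => _ (f u v))); apply Hf.
Qed.

Lemma square_CInt_quarter_turn d f : continuous_C2 f ->
  square_CInt d (fun x y => f (- y) x) = square_CInt d f.
Proof.
  intros Hf; rewrite !square_CInt_components.
  - rewrite (square_RInt_quarter_turn d (fun x y => fst (f x y))),
      (square_RInt_quarter_turn d (fun x y => snd (f x y))); auto; apply Hf.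
  - exact Hf.
  - intros x y; split;
      apply (continuity_2d_pt_quarter_turn (fun u v => _ (f u v))), Hf.
Qed.

Lemma square_CInt_Cmult d w f : continuous_C2 f ->
  square_CInt d (fun x y => Cmult w (f x y)) = Cmult w (square_CInt d f).
Proof.
  intros Hf.
  assert (Hlin : forall a b x y,
            continuity_2d_pt (fun u v => a * fst (f u v) + b * snd (f u v)) x y)
    by (intros; apply continuity_2d_pt_plus; apply continuity_2d_pt_mult;
        try apply continuity_2d_pt_const; apply Hf).
  destruct w as [a b]; rewrite !square_CInt_components.
  - rewrite (square_RInt_ext d _ (fun x y => a * fst (f x y) + (- b) * snd (f x y))),
      (square_RInt_ext d (fun x y => snd _) (fun x y => b * fst (f x y) + a * snd (f x y)))
      by (intros; simpl; ring).
    rewrite !square_RInt_lin by apply Hf.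
    apply injective_projections; simpl; ring.
  - exact Hf.
  - intros x y; split.
    + apply (continuity_2d_pt_ext (fun u v => a * fst (f u v) + - b * snd (f u v)));
        [intros; simpl; ring | apply Hlin].
    + apply (continuity_2d_pt_ext (fun u v => b * fst (f u v) + a * snd (f u v)));
        [intros; simpl; ring | apply Hlin].
Qed.

Lemma square_CInt_ext d f g : (forall x y, f x y = g x y) -> square_CInt d f = square_CInt d g.
Proof.
  intros E; unfold square_CInt.
  apply (RInt_ext (V := C_R_CompleteNormedModule)); intros.
  apply (RInt_ext (V := C_R_CompleteNormedModule)); intros; apply E.
Qed.

(** * Rodrigues polynomials *)

Fixpoint peval (p : list R) (u : R) : R :=
  match p with nil => 0 | a :: q => a + u * peval q u end.

Fixpoint padd (p q : list R) : list R :=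
  match p, q with
  | nil, _ => q
  | _, nil => p
  | a :: p', b :: q' => (a + b) :: padd p' q'
  end.

Definition pscal (c : R) (p : list R) : list R := map (Rmult c) p.

Fixpoint pmul (p q : list R) : list R :=
  match p with nil => nil | a :: p' => padd (pscal a q) (0 :: pmul p' q) end.

Fixpoint pder (p : list R) : list R :=
  match p with nil => nil | _ :: q => padd q (0 :: pder q) end.

Fixpoint ppow (p : list R) (n : nat) : list R :=
  match n with O => 1 :: nil | S n => pmul p (ppow p n) end.

Lemma peval_add p q u : peval (padd p q) u = peval p u + peval q u.
Proof.
  revert q; induction p as [|a p IH]; intros [|b q]; simpl; try ring.
  rewrite IH; ring.
Qed.

Lemma peval_scal c p u : peval (pscal c p) u = c * peval p u.
Proof. induction p as [|a p IH]; simpl; [ring | rewrite IH; ring]. Qed.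

Lemma peval_mul p q u : peval (pmul p q) u = peval p u * peval q u.
Proof.
  induction p as [|a p IH]; simpl; [ring|].
  rewrite peval_add, peval_scal; simpl; rewrite IH; ring.
Qed.

Lemma peval_pow p n u : peval (ppow p n) u = peval p u ^ n.
Proof. induction n as [|n IH]; simpl; [ring | rewrite peval_mul, IH; ring]. Qed.

Lemma is_derive_peval p u : is_derive (peval p) u (peval (pder p) u).
Proof.
  apply is_derive_Reals.
  induction p as [|a p IH]; simpl.
  - apply derivable_pt_lim_const.
  - rewrite peval_add; simpl.
    replace (peval p u + (0 + u * peval (pder p) u))
      with (0 + (1 * peval p u + u * peval (pder p) u)) by ring.
    apply (derivable_pt_lim_plus (fun _ => a)); [apply derivable_pt_lim_const|].
    apply (derivable_pt_lim_mult id); [apply derivable_pt_lim_id | exact IH].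
Qed.

Definition rodrigues (l : nat) (s : R) : R := (s ^ 2 - 1) ^ l.

Lemma Derive_n_rodrigues_poly l j :
  exists q, forall u, Derive_n (rodrigues l) j u = peval q u.
Proof.
  induction j as [|j [q Hq]].
  - exists (ppow (-1 :: 0 :: 1 :: nil) l); intros u.
    rewrite peval_pow; unfold rodrigues; simpl; f_equal; ring.
  - exists (pder q); intros u; simpl.
    rewrite (Derive_ext _ (peval q)) by exact Hq.
    apply is_derive_unique, is_derive_peval.
Qed.

Lemma is_derive_Derive_n_rodrigues l j u :
  is_derive (Derive_n (rodrigues l) j) u (Derive_n (rodrigues l) (S j) u).
Proof.
  destruct (Derive_n_rodrigues_poly l j) as [q Hq]; simpl.
  rewrite (Derive_ext _ (peval q)) by exact Hq.
  apply (is_derive_ext (peval q)); [intros; symmetry; apply Hq|].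
  rewrite (is_derive_unique _ _ _ (is_derive_peval q u)); apply is_derive_peval.
Qed.

(* Since [rodrigues l u = (u - 1)^l (u + 1)^l], each derivative of order [j <= l]
   keeps the factor [(u - 1)^(l - j)]. *)
Lemma Derive_n_rodrigues_factor l j : (j <= l)%nat ->
  exists h, forall u, Derive_n (rodrigues l) j u = (u - 1) ^ (l - j) * peval h u.
Proof.
  induction j as [|j IH]; intros Hj.
  - exists (ppow (1 :: 1 :: nil) l); intros u.
    rewrite peval_pow, Nat.sub_0_r, <- Rpow_mult_distr; unfold rodrigues; simpl.
    f_equal; ring.
  - destruct IH as [h Hh]; [lia|].
    destruct (l - j)%nat as [|a] eqn:E; [lia|].
    replace (l - S j)%nat with a by lia.
    exists (padd (pscal (INR (S a)) h) (pmul (-1 :: 1 :: nil) (pder h))); intros u; simpl Derive_n.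
    rewrite (Derive_ext _ (fun u => (u - 1) ^ S a * peval h u)) by exact Hh.
    apply is_derive_unique, is_derive_Reals.
    rewrite peval_add, peval_scal, peval_mul.
    replace ((u - 1) ^ a * (INR (S a) * peval h u + peval (-1 :: 1 :: nil) u * peval (pder h) u))
      with (INR (S a) * (u - 1) ^ pred (S a) * (1 - 0) * peval h u
            + (u - 1) ^ S a * peval (pder h) u) by (simpl; ring).
    apply (derivable_pt_lim_mult (fun u => (u - 1) ^ S a)).
    + apply (derivable_pt_lim_comp (fun u => u - 1) (fun v => v ^ S a)).
      * apply (derivable_pt_lim_minus id);
          [apply derivable_pt_lim_id | apply derivable_pt_lim_const].
      * apply derivable_pt_lim_pow.
    + apply is_derive_Reals, is_derive_peval.
Qed.

(** * Associated Legendre functions of cos theta *)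

Lemma sqrt_1_minus_cos2 t : 0 < t < PI -> sqrt (1 - cos t ^ 2) = sin t.
Proof.
  intros Ht; assert (0 < sin t) by (apply sin_gt_0; lra).
  rewrite <- (sqrt_pow2 (sin t)) by lra; f_equal.
  pose proof (sin2_cos2 t); unfold Rsqr in *; simpl; nra.
Qed.

Definition legendre_cos_factor (l : nat) (m : Z) (G G' : R -> R) : Prop :=
  (forall c, -1 < c -> is_derive G c (G' c) /\ continuous G' c) /\
  (forall t, 0 < t < PI -> assocLegendre l m (cos t) = sin t ^ Z.abs_nat m * G (cos t)).

Definition legendre_const (l : nat) (m : Z) : R :=
  (-1) ^ Z.abs_nat m / (2 ^ l * INR (Factorial.fact l)).

Lemma legendre_cos_factor_nonneg l m : (0 <= m)%Z ->
  let j := Z.to_nat (Z.of_nat l + m) in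
  legendre_cos_factor l m (fun c => legendre_const l m * Derive_n (rodrigues l) j c)
                          (fun c => legendre_const l m * Derive_n (rodrigues l) (S j) c).
Proof.
  intros Hm j; split.
  - intros c _; split.
    + apply is_derive_scal, is_derive_Derive_n_rodrigues.
    + apply (ex_derive_continuous (V := R_NormedModule)).
      apply ex_derive_scal; eexists; apply is_derive_Derive_n_rodrigues.
  - intros t Ht; unfold assocLegendre, legendre_const.
    destruct (Z_of_nat_complete m Hm) as [k ->].
    rewrite sqrt_1_minus_cos2, <- pow_powerRZ, Zabs2Nat.id by exact Ht.
    unfold j, rodrigues; ring.
Qed.

Lemma cos_gt_m1 t : 0 < t < PI -> -1 < cos t.
Proof. intros Ht; rewrite <- cos_PI; apply cos_decreasing_1; lra. Qed.

(* Uses [sin^2 = (1 - cos) (1 + cos)]. *)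
Lemma inv_sin_pow_mul_cos_sub_1_pow t k : 0 < t < PI ->
  / sin t ^ k * (cos t - 1) ^ k = sin t ^ k * ((-1) ^ k / (1 + cos t) ^ k).
Proof.
  intros Ht; assert (0 < sin t) by (apply sin_gt_0; lra).
  pose proof (cos_gt_m1 t Ht).
  assert (Hs2 : (sin t ^ k) ^ 2 = (1 - cos t) ^ k * (1 + cos t) ^ k).
  { rewrite <- pow_mult, Nat.mul_comm, pow_mult, <- Rpow_mult_distr.
    f_equal; pose proof (sin2_cos2 t); unfold Rsqr in *; nra. }
  assert (Hs : sin t ^ k <> 0) by (apply pow_nonzero; lra).
  assert (Hp : (1 + cos t) ^ k <> 0) by (apply pow_nonzero; lra).
  apply (Rmult_eq_reg_l (sin t ^ k)); [|exact Hs].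
  replace (sin t ^ k * (sin t ^ k * ((-1) ^ k / (1 + cos t) ^ k)))
    with ((sin t ^ k) ^ 2 * ((-1) ^ k / (1 + cos t) ^ k)) by ring.
  rewrite Hs2.
  replace ((cos t - 1) ^ k) with ((-1) ^ k * (1 - cos t) ^ k)
    by (rewrite <- Rpow_mult_distr; f_equal; ring).
  field; auto.
Qed.

Lemma legendre_cos_factor_neg l m : (- Z.of_nat l <= m < 0)%Z ->
  exists G G', legendre_cos_factor l m G G'.
Proof.
  intros Hm; set (k := Z.abs_nat m).
  assert (Ej : Z.to_nat (Z.of_nat l + m) = (l - k)%nat) by lia.
  destruct (Derive_n_rodrigues_factor l (l - k) ltac:(lia)) as [h Hh].
  replace (l - (l - k))%nat with k in Hh by lia.
  set (K := legendre_const l m * (-1) ^ k).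
  exists (fun c => K * peval h c / (1 + c) ^ k),
    (fun c => K * (peval (pder h) c / (1 + c) ^ k
                   - INR k * peval h c * (1 + c) ^ pred k / ((1 + c) ^ k) ^ 2)).
  split.
  - intros c Hc; assert (Hp : (1 + c) ^ k <> 0) by (apply pow_nonzero; lra).
    split.
    + auto_derive; [repeat split; auto; eexists; apply is_derive_peval|].
      replace (Derive (fun x => peval h x) c) with (peval (pder h) c)
        by (symmetry; apply is_derive_unique, is_derive_peval).
      field; auto.
    + apply (ex_derive_continuous (V := R_NormedModule)).
      auto_derive; repeat split; auto; eexists; apply is_derive_peval.
  - intros t Ht; unfold assocLegendre; fold (rodrigues l) k.
    rewrite Ej, Hh, sqrt_1_minus_cos2 by exact Ht.
    replace (powerRZ (sin t) m) with (/ sin t ^ k)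
      by (replace m with (- Z.of_nat k)%Z by lia; rewrite powerRZ_neg', <- pow_powerRZ; auto).
    assert (Hp : (1 + cos t) ^ k <> 0)
      by (apply pow_nonzero; pose proof (cos_gt_m1 t Ht); lra).
    transitivity (legendre_const l m * peval h (cos t) * (/ sin t ^ k * (cos t - 1) ^ k));
      [unfold legendre_const; fold k; ring|].
    rewrite inv_sin_pow_mul_cos_sub_1_pow by exact Ht.
    unfold K; field; exact Hp.
Qed.

Lemma legendre_cos_factor_exists l m : (- Z.of_nat l <= m)%Z ->
  exists G G', legendre_cos_factor l m G G'.
Proof.
  intros Hm; destruct (Z_lt_le_dec m 0) as [Hneg | Hnonneg].
  - apply legendre_cos_factor_neg; lia.
  - eexists; eexists; apply (legendre_cos_factor_nonneg l m Hnonneg).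
Qed.

Lemma Derive_ext_open_interval (f g : R -> R) a b x : a < x < b ->
  (forall t, a < t < b -> f t = g t) -> Derive f x = Derive g x.
Proof.
  intros Hx Hfg; apply Derive_ext_loc.
  assert (Hr : 0 < Rmin (x - a) (b - x)) by (apply Rmin_pos; lra).
  exists (mkposreal _ Hr); intros t Ht; apply Hfg.
  apply Rabs_lt_between' in Ht; simpl in Ht.
  pose proof (Rmin_l (x - a) (b - x)); pose proof (Rmin_r (x - a) (b - x)); lra.
Qed.

Lemma Derive_legendre_cos l m G G' th :
  legendre_cos_factor l m G G' -> 0 < th < PI ->
  Derive (fun t => assocLegendre l m (cos t)) th
  = INR (Z.abs_nat m) * sin th ^ pred (Z.abs_nat m) * cos th * G (cos th)
    - sin th ^ S (Z.abs_nat m) * G' (cos th).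
Proof.
  intros [HG Hfac] Hth.
  pose proof (cos_gt_m1 th Hth) as Hc.
  rewrite (Derive_ext_open_interval _ (fun t => sin t ^ Z.abs_nat m * G (cos t)) 0 PI) by auto.
  destruct (HG _ Hc) as [HdG _].
  apply is_derive_unique; auto_derive; [eexists; exact HdG|].
  replace (Derive (fun x => G x) (cos th)) with (G' (cos th))
    by (symmetry; apply is_derive_unique, HdG).
  simpl; ring.
Qed.

(** * The integrand *)

Definition integrand (rC : R) (l : nat) (m : Z) (x y : R) : C :=
  Cmult (RtoC (/ sphR rC x y ^ (l + 2))) (dot_ez (nu_lm l m (sphTheta rC x y) (sphPhi x y))).

Definition radial_part (rC : R) (l : nat) (m : Z) (x y : R) : R :=
  let th := sphTheta rC x y in
  / sphR rC x y ^ (l + 2) * Ynorm l m *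
  (- (INR l + 1) * assocLegendre l m (cos th) * cos th
   - Derive (fun t => assocLegendre l m (cos t)) th * sin th).

Lemma integrand_polar rC l m x y :
  integrand rC l m x y
  = (radial_part rC l m x y * cos (IZR m * sphPhi x y),
     radial_part rC l m x y * sin (IZR m * sphPhi x y)).
Proof.
  unfold integrand, radial_part, nu_lm, dot_ez, cadd3, cscal, e_R, e_theta, e_phi,
    Ylm, dYlm_dtheta, Y_re, Y_im; simpl.
  rewrite !Derive_scal; apply injective_projections; simpl; ring.
Qed.

Lemma sphR_pos rC x y : 0 < rC -> 0 < sphR rC x y.
Proof. intros; unfold sphR; apply sqrt_lt_R0; nra. Qed.

Lemma sphR_sqr rC x y : sphR rC x y ^ 2 = sqrt (x ^ 2 + y ^ 2) ^ 2 + rC ^ 2.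
Proof. unfold sphR; rewrite !pow2_sqrt; nra. Qed.

Lemma sphR_ratio_bounds rC x y : 0 < rC -> 0 < rC / sphR rC x y <= 1.
Proof.
  intros HrC; pose proof (sphR_pos rC x y HrC); pose proof (sphR_sqr rC x y).
  split; [apply Rdiv_lt_0_compat; lra|].
  apply (Rmult_le_reg_r (sphR rC x y)); [lra|].
  unfold Rdiv; rewrite Rmult_assoc, Rinv_l, Rmult_1_r, Rmult_1_l; nra.
Qed.

Lemma sphR_ratio_sqr rC x y : 0 < rC ->
  (sqrt (x ^ 2 + y ^ 2) / sphR rC x y) ^ 2 = 1 - (rC / sphR rC x y) ^ 2.
Proof.
  intros HrC; pose proof (sphR_pos rC x y HrC); pose proof (sphR_sqr rC x y) as HR2.
  replace 1 with (sphR rC x y ^ 2 / sphR rC x y ^ 2) at 1 by (field; lra).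
  rewrite HR2 at 1; field; lra.
Qed.

Lemma cos_sphTheta rC x y : 0 < rC -> cos (sphTheta rC x y) = rC / sphR rC x y.
Proof.
  intros HrC; pose proof (sphR_ratio_bounds rC x y HrC).
  unfold sphTheta; apply cos_acos; lra.
Qed.

Lemma sin_sphTheta rC x y : 0 < rC ->
  sin (sphTheta rC x y) = sqrt (x ^ 2 + y ^ 2) / sphR rC x y.
Proof.
  intros HrC; pose proof (sphR_ratio_bounds rC x y HrC); pose proof (sphR_pos rC x y HrC).
  unfold sphTheta; rewrite sin_acos by lra; unfold Rsqr.
  rewrite <- (sqrt_pow2 (sqrt (x ^ 2 + y ^ 2) / sphR rC x y)), sphR_ratio_sqr by
    (first [exact HrC | apply Rdiv_le_0_compat; [apply sqrt_pos | lra]]).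
  f_equal; ring.
Qed.

Lemma sphTheta_bounds rC x y : 0 < rC -> (x <> 0 \/ y <> 0) -> 0 < sphTheta rC x y < PI.
Proof.
  intros HrC Hxy.
  assert (Hs : 0 < sin (sphTheta rC x y)).
  { rewrite sin_sphTheta by exact HrC.
    apply Rdiv_lt_0_compat; [apply sqrt_lt_R0; destruct Hxy; nra | apply sphR_pos, HrC]. }
  destruct (acos_bound (rC / sphR rC x y)) as [[H0 | H0] [H1 | H1]]; unfold sphTheta in *;
    rewrite <- ?H0, ?H1, ?sin_0, ?sin_PI in Hs; lra.
Qed.

Lemma radial_part_on_axis rC l m : 0 < rC -> m <> 0%Z -> radial_part rC l m 0 0 = 0.
Proof.
  intros HrC Hm; unfold radial_part.
  rewrite cos_sphTheta, sin_sphTheta by exact HrC.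
  replace (sphR rC 0 0) with rC
    by (unfold sphR; rewrite <- (sqrt_pow2 rC) at 1 by lra; f_equal; ring).
  replace (0 ^ 2 + 0 ^ 2) with 0 by ring; rewrite sqrt_0, Rdiv_diag by lra.
  unfold assocLegendre; replace (1 - 1 ^ 2) with 0 by ring; rewrite sqrt_0.
  replace (powerRZ 0 m) with 0
    by (destruct m; simpl; [lia | rewrite pow_i | rewrite pow_i, Rinv_0]; auto; lia).
  unfold Rdiv; ring.
Qed.

Lemma origin_or_not (x y : R) : (x = 0 /\ y = 0) \/ (x <> 0 \/ y <> 0).
Proof. destruct (Req_dec x 0), (Req_dec y 0); tauto. Qed.

Lemma azimuth_polar x y : (x <> 0 \/ y <> 0) ->
  cos (azimuth x y) = x / sqrt (x ^ 2 + y ^ 2) /\ sin (azimuth x y) = y / sqrt (x ^ 2 + y ^ 2).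
Proof.
  intros Hxy.
  assert (Hr : 0 < sqrt (x ^ 2 + y ^ 2)) by (apply sqrt_lt_R0; destruct Hxy; nra).
  assert (Hatan : x <> 0 ->
    cos (atan (y / x)) = Rabs x / sqrt (x ^ 2 + y ^ 2) /\
    sin (atan (y / x)) = y / x * Rabs x / sqrt (x ^ 2 + y ^ 2)).
  { intros Hx; assert (0 < Rabs x) by (apply Rabs_pos_lt; auto).
    rewrite cos_atan, sin_atan.
    replace (sqrt (1 + (y / x)²)) with (sqrt (x ^ 2 + y ^ 2) / Rabs x).
    - split; field; lra.
    - rewrite <- (sqrt_pow2 (Rabs x)), <- sqrt_div by (nra || lra).
      f_equal; rewrite pow2_abs; unfold Rsqr; field; lra. }
  unfold azimuth.
  destruct (Rlt_dec 0 x) as [H1|H1]; [|destruct (Rlt_dec x 0) as [H2|H2]].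
  - destruct (Hatan (Rgt_not_eq _ _ H1)) as [A1 A2]; rewrite A1, A2, Rabs_right by lra.
    split; field; lra.
  - destruct (Hatan (Rlt_not_eq _ _ H2)) as [A1 A2]; rewrite Rabs_left in A1, A2 by lra.
    destruct (Rle_dec 0 y);
      rewrite ?cos_plus, ?sin_plus, ?cos_minus, ?sin_minus, cos_PI, sin_PI, A1, A2;
      split; field; lra.
  - assert (x = 0) by lra; subst x.
    replace (0 ^ 2 + y ^ 2) with (y ^ 2) in * by ring.
    rewrite <- pow2_abs, sqrt_pow2 in * by apply Rabs_pos.
    destruct (Rlt_dec 0 y); [|destruct (Rlt_dec y 0)]; [| |destruct Hxy; lra];
      rewrite ?cos_neg, ?sin_neg, cos_PI2, sin_PI2, ?Rabs_right, ?Rabs_left by lra;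
      split; field; lra.
Qed.

Lemma Cpow_cos_sin n a : Cpow (cos a, sin a) n = (cos (INR n * a), sin (INR n * a)).
Proof.
  induction n as [|n IH].
  - rewrite Rmult_0_l, cos_0, sin_0; reflexivity.
  - rewrite Cpow_S, IH, S_INR, Rmult_plus_distr_r, Rmult_1_l, Rplus_comm, cos_plus, sin_plus.
    apply injective_projections; simpl; ring.
Qed.

Lemma Cpow_polar k x y :
  Cpow (x, y) k = (sqrt (x ^ 2 + y ^ 2) ^ k * cos (INR k * azimuth x y),
                   sqrt (x ^ 2 + y ^ 2) ^ k * sin (INR k * azimuth x y)).
Proof.
  destruct (origin_or_not x y) as [[-> ->] | Hxy].
  - replace (0 ^ 2 + 0 ^ 2) with 0 by ring; rewrite sqrt_0.
    destruct k as [|k].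
    + rewrite Rmult_0_l, cos_0, sin_0; apply injective_projections; simpl; ring.
    + rewrite Cpow_S, pow_i by lia; apply injective_projections; simpl; ring.
  - destruct (azimuth_polar x y Hxy) as [Hc Hs].
    assert (Hr : 0 < sqrt (x ^ 2 + y ^ 2)) by (apply sqrt_lt_R0; destruct Hxy; nra).
    set (r := sqrt (x ^ 2 + y ^ 2)) in *.
    replace (x, y) with (Cmult (RtoC r) (cos (azimuth x y), sin (azimuth x y)))
      by (rewrite Hc, Hs; apply injective_projections; simpl; field; lra).
    rewrite Cpow_mult_l, Cpow_cos_sin, <- RtoC_pow.
    apply injective_projections; simpl; ring.
Qed.

Lemma cos_sin_IZR_mult m a :
  cos (IZR m * a) = cos (INR (Z.abs_nat m) * a) /\
  sin (IZR m * a) = IZR (Z.sgn m) * sin (INR (Z.abs_nat m) * a).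
Proof.
  rewrite INR_IZR_INZ, Zabs2Nat.id_abs.
  destruct m as [|p|p]; simpl Z.abs; simpl Z.sgn.
  - rewrite Rmult_0_l, sin_0; split; ring.
  - split; ring.
  - rewrite <- Pos2Z.opp_pos, opp_IZR, Ropp_mult_distr_l_reverse, cos_neg, sin_neg; split; ring.
Qed.

Lemma continuity_2d_pt_Cpow k x y :
  continuity_2d_pt (fun u v => fst (Cpow (u, v) k)) x y /\
  continuity_2d_pt (fun u v => snd (Cpow (u, v) k)) x y.
Proof.
  induction k as [|k [IH1 IH2]]; simpl; split; continuity_2d; auto.
Qed.

Lemma continuity_2d_pt_sphR rC x y : 0 < rC -> continuity_2d_pt (sphR rC) x y.
Proof.
  intros HrC; unfold sphR.
  apply (continuity_2d_pt_comp sqrt (fun u v => u ^ 2 + v ^ 2 + rC ^ 2)).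
  - apply continuity_pt_filterlim, continuity_pt_sqrt; nra.
  - continuity_2d.
Qed.

Section RegularRadialPart.

Variables (rC : R) (l : nat) (m : Z) (G G' : R -> R).
Hypothesis HrC : 0 < rC.
Hypothesis Hfactor : legendre_cos_factor l m G G'.

(* What is left of [radial_part] after pulling out [rho ^ |m|], with [c = cos theta]. *)
Definition regular_radial_part (x y : R) : R :=
  let c := rC / sphR rC x y in
  / sphR rC x y ^ (l + 2 + Z.abs_nat m) * Ynorm l m *
  (- (INR l + 1 + INR (Z.abs_nat m)) * c * G c + (1 - c ^ 2) * G' c).

Lemma radial_part_off_axis x y : (x <> 0 \/ y <> 0) ->
  radial_part rC l m x y = sqrt (x ^ 2 + y ^ 2) ^ Z.abs_nat m * regular_radial_part x y.
Proof.
  intros Hxy; pose proof (sphTheta_bounds rC x y HrC Hxy) as Hth.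
  pose proof (sphR_pos rC x y HrC) as HR.
  unfold radial_part, regular_radial_part.
  rewrite (Derive_legendre_cos l m G G'), (proj2 Hfactor), cos_sphTheta, sin_sphTheta,
    <- sphR_ratio_sqr by auto.
  set (s := sqrt (x ^ 2 + y ^ 2) / sphR rC x y).
  replace (sqrt (x ^ 2 + y ^ 2)) with (s * sphR rC x y) by (unfold s; field; lra).
  rewrite Rpow_mult_distr, !pow_add.
  destruct (Z.abs_nat m) as [|k]; simpl pred; rewrite ?S_INR; simpl; field;
    repeat split; try apply pow_nonzero; lra.
Qed.

Lemma integrand_regular x y : m <> 0%Z ->
  integrand rC l m x y
  = (regular_radial_part x y * fst (Cpow (x, y) (Z.abs_nat m)),
     IZR (Z.sgn m) * regular_radial_part x y * snd (Cpow (x, y) (Z.abs_nat m))).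
Proof.
  intros Hm; rewrite integrand_polar.
  destruct (origin_or_not x y) as [[-> ->] | Hxy].
  - rewrite radial_part_on_axis by auto.
    replace (Z.abs_nat m) with (S (pred (Z.abs_nat m))) by lia.
    rewrite Cpow_S; apply injective_projections; simpl; ring.
  - rewrite radial_part_off_axis, Cpow_polar by auto.
    destruct (cos_sin_IZR_mult m (sphPhi x y)) as [Ec Es]; unfold sphPhi in *.
    rewrite Ec, Es; apply injective_projections; simpl; ring.
Qed.

Lemma continuity_2d_pt_regular_radial_part x y : continuity_2d_pt regular_radial_part x y.
Proof.
  pose proof (sphR_pos rC x y HrC) as HR.
  pose proof (sphR_ratio_bounds rC x y HrC) as Hc.
  assert (Hratio : continuity_2d_pt (fun u v => rC / sphR rC u v) x y).
  { apply continuity_2d_pt_mult; [apply continuity_2d_pt_const|].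
    apply continuity_2d_pt_inv; [apply continuity_2d_pt_sphR | lra]; auto. }
  destruct (proj1 Hfactor (rC / sphR rC x y) ltac:(lra)) as [HdG HG'].
  assert (HG : continuous G (rC / sphR rC x y))
    by (apply (ex_derive_continuous (V := R_NormedModule)); eexists; exact HdG).
  unfold regular_radial_part.
  continuity_2d; auto using continuity_2d_pt_comp.
  apply continuity_2d_pt_inv; [apply continuity_2d_pt_pow, continuity_2d_pt_sphR, HrC|].
  apply pow_nonzero; lra.
Qed.

Lemma continuity_2d_pt_integrand x y : m <> 0%Z ->
  continuity_2d_pt (fun u v => fst (integrand rC l m u v)) x y /\
  continuity_2d_pt (fun u v => snd (integrand rC l m u v)) x y.
Proof.
  intros Hm; destruct (continuity_2d_pt_Cpow (Z.abs_nat m) x y) as [H1 H2].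
  pose proof (continuity_2d_pt_regular_radial_part x y).
  split; eapply continuity_2d_pt_ext;
    try (intros u v; rewrite integrand_regular by exact Hm; reflexivity);
    simpl; continuity_2d; auto.
Qed.

End RegularRadialPart.

(** * The quarter turn *)

Lemma cos_sin_IZR_mult_congr m a b : cos a = cos b -> sin a = sin b ->
  cos (IZR m * a) = cos (IZR m * b) /\ sin (IZR m * a) = sin (IZR m * b).
Proof.
  intros Hc Hs.
  destruct (cos_sin_IZR_mult m a) as [-> ->], (cos_sin_IZR_mult m b) as [-> ->].
  pose proof (Cpow_cos_sin (Z.abs_nat m) a) as Ea; pose proof (Cpow_cos_sin (Z.abs_nat m) b) as Eb.
  rewrite Hc, Hs, Eb in Ea; injection Ea as -> ->; auto.
Qed.

Lemma azimuth_quarter_turn m x y : (x <> 0 \/ y <> 0) ->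
  cos (IZR m * azimuth (- y) x) = cos (IZR m * azimuth x y + IZR m * (PI / 2)) /\
  sin (IZR m * azimuth (- y) x) = sin (IZR m * azimuth x y + IZR m * (PI / 2)).
Proof.
  intros Hxy; assert (Hyx : - y <> 0 \/ x <> 0) by (destruct Hxy; [right | left]; lra).
  rewrite <- Rmult_plus_distr_l; apply cos_sin_IZR_mult_congr.
  - destruct (azimuth_polar (- y) x) as [-> _]; [exact Hyx|].
    destruct (azimuth_polar x y Hxy) as [_ Hs].
    rewrite cos_plus, cos_PI2, sin_PI2, Hs.
    replace ((- y) ^ 2 + x ^ 2) with (x ^ 2 + y ^ 2) by ring; unfold Rdiv; ring.
  - destruct (azimuth_polar (- y) x) as [_ ->]; [exact Hyx|].
    destruct (azimuth_polar x y Hxy) as [Hc _].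
    rewrite sin_plus, cos_PI2, sin_PI2, Hc.
    replace ((- y) ^ 2 + x ^ 2) with (x ^ 2 + y ^ 2) by ring; unfold Rdiv; ring.
Qed.

Lemma radial_part_quarter_turn rC l m x y : radial_part rC l m (- y) x = radial_part rC l m x y.
Proof.
  unfold radial_part, sphTheta.
  replace (sphR rC (- y) x) with (sphR rC x y) by (unfold sphR; f_equal; ring).
  reflexivity.
Qed.

Lemma integrand_quarter_turn rC l m x y : 0 < rC -> m <> 0%Z ->
  integrand rC l m (- y) x
  = Cmult (cos (IZR m * (PI / 2)), sin (IZR m * (PI / 2))) (integrand rC l m x y).
Proof.
  intros HrC Hm; rewrite !integrand_polar, radial_part_quarter_turn.
  destruct (origin_or_not x y) as [[-> ->] | Hxy].
  - rewrite Ropp_0, radial_part_on_axis by auto; apply injective_projections; simpl; ring.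
  - unfold sphPhi; destruct (azimuth_quarter_turn m x y Hxy) as [-> ->].
    rewrite cos_plus, sin_plus; apply injective_projections; simpl; ring.
Qed.

Lemma cos_IZR_mult_PI2_neq_1 m : ~ (4 | m)%Z -> cos (IZR m * (PI / 2)) <> 1.
Proof.
  intros H4 Hcos; apply H4.
  replace (IZR m * (PI / 2)) with (2 * (IZR m * PI / 4)) in Hcos by field.
  rewrite cos_2a_sin in Hcos.
  destruct (sin_eq_0_0 (IZR m * PI / 4)) as [n Hn]; [nra|].
  exists n; apply eq_IZR; rewrite mult_IZR.
  pose proof PI_RGT_0.
  replace (IZR m) with (IZR m * PI / 4 * (4 / PI)) by (field; lra).
  rewrite Hn; simpl; field; lra.
Qed.

Lemma Cmult_fixpoint_eq0 (w v : C) : w <> 1 -> v = Cmult w v -> v = 0.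
Proof.
  intros Hw Hv.
  assert (H : (1 - w <> 0)%C) by (intros E; apply Hw; rewrite <- (Cplus_0_l w), <- E; ring).
  replace v with (/ (1 - w) * (v - w * v))%C by (field; exact H).
  rewrite <- Hv; ring.
Qed.

Theorem mainTheorem5 (d rC : R) (l : nat) (m : Z) :
  0 < d -> 0 < rC -> (1 <= l)%nat ->
  (- Z.of_nat l <= m <= Z.of_nat l)%Z ->
  ~ (4 | m)%Z ->
  v_lm d rC l m = RtoC 0.
Proof.
  intros _ HrC _ Hml H4.
  assert (Hm : m <> 0%Z) by (intros ->; apply H4; exists 0%Z; lia).
  destruct (legendre_cos_factor_exists l m) as (G & G' & HG); [lia|].
  assert (Hcont : continuous_C2 (integrand rC l m))
    by (intros x y; apply (continuity_2d_pt_integrand rC l m G G'); auto).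
  set (w := (cos (IZR m * (PI / 2)), sin (IZR m * (PI / 2)))).
  change (v_lm d rC l m) with (square_CInt d (integrand rC l m)).
  apply (Cmult_fixpoint_eq0 w).
  - intros E; apply (cos_IZR_mult_PI2_neq_1 m H4); injection E; auto.
  - rewrite <- square_CInt_Cmult, <- square_CInt_quarter_turn by exact Hcont.
    apply square_CInt_ext; intros x y; apply integrand_quarter_turn; auto.
Qed.
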